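(* Fix an integer $k\geq 2$. For each $n\geq 1$ there exist a set $X_n$ with $|X_n|=n$ and a function $f_n:X_n\to X_n$ such that, as $n\to\infty$, \[\deg(f_n)=k+1+o(1)\quad\text{and}\quad\deg(f_n^k)=n^{1-1/2^{k-1}}(1+o(1)),\] where $f_n^k$ denotes the $k$-fold iterate of $f_n$.
   Context: For finite sets $X,Y$ and a function $f:X\to Y$, the degree of $f$ is $\deg(f)=\frac{1}{|X|}\sum_{y\in Y}|f^{-1}(y)|^2$. *)

From HB Require Import structures.
From mathcomp Require Import all_boot all_order all_algebra.
From mathcomp Require Import all_classical all_reals all_analysis.
Set Implicit Arguments. Unset Strict Implicit. Unset Printing Implicit Defensive.
Import Order.TTheory GRing.Theory Num.Theory.
Local Open Scope ring_scope.

Definition deg (R : realType) (X Y : finType) (f : X -> Y) : R :=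
  (\sum_(y : Y) (#|[set x | f x == y]|%:R) ^+ 2) / (#|X|%:R).

(* The map f_n is a rooted tree of depth k on an initial segment of 'I_n, with
   all other points fixed: level 0 is the root 0, a fixed point, level i has
   a_i = t^(2^k - 2^(k-i)) vertices and each vertex of level i < k has
   b_i = t^(2^(k-i-1)) children, where t = floor(n^(1/2^k)).  A vertex of level
   i < k has b_i preimages, so level i contributes a_i * b_i^2 = t^(2^k) ~ n to
   sum_y |f^-1(y)|^2; the fixed points contribute another ~ n, whence
   deg f_n -> k + 1.  The k-th iterate collapses the whole tree, of size
   S ~ a_k = t^(2^k - 1), onto the root, so n * deg (f_n^k) ~ S^2 ~ n^(2 - 2/2^k).
   All relative errors are O(1/t). *)

From HB Require Import structures.
From mathcomp Require Import all_boot all_order all_algebra.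
From mathcomp Require Import all_classical all_reals all_analysis.
From mathcomp Require Import zify ring lra.
Set Implicit Arguments. Unset Strict Implicit. Unset Printing Implicit Defensive.
Import Order.TTheory GRing.Theory Num.Theory.
Import numFieldNormedType.Exports.

Lemma sum_nat_eq m n y : \sum_(m <= x < n) (x == y) = (m <= y < n).
Proof.
rewrite -big_mkcond /= sum1_count.
by rewrite count_uniq_mem ?iota_uniq // mem_index_iota; case: (_ && _).
Qed.

Lemma sum_nat_in_range lo hi n : lo <= hi <= n -> \sum_(0 <= y < n) (lo <= y < hi) = hi - lo.
Proof.
move=> /andP[lh hn]; rewrite -big_mkcond /= sum1_count /index_iota subn0.
rewrite -(subnKC hn) -(subnKC lh) !iotaD !count_cat add0n subnKC // -addnA.
rewrite (@eq_in_count _ _ pred0) ?count_pred0 => [|y]; last by rewrite mem_iota /=; lia.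
rewrite (@eq_in_count _ _ predT) ?count_predT ?size_iota => [|y]; last by rewrite mem_iota /=; lia.
by rewrite (@eq_in_count _ _ pred0) ?count_pred0 ?addn0 // => y; rewrite mem_iota /=; lia.
Qed.

Lemma sum_divn_eq d A c y : 0 < d ->
  \sum_(0 <= x < A * d) (c + x %/ d == y) = d * (c <= y < c + A).
Proof.
move=> d_gt0; elim: A => [|A IH].
  by rewrite mul0n big_geq // addn0 ltnNge andbN muln0.
rewrite mulSn addnC (big_cat_nat _ (n := A * d)) ?leq_addr //= IH.
rewrite (eq_big_nat _ _ (F2 := fun=> (c + A == y) : nat)) => [|x hx]; last first.
  suff -> : x %/ d = A by [].
  by apply/eqP; rewrite eqn_leq leq_divRL // -ltnS ltn_divLR //; lia.
rewrite sum_nat_const_nat addKn.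
rewrite -mulnDr addnS ltnS; congr (d * _).
case: (ltngtP y (c + A)) => [lt|gt|->]; rewrite ?andbF ?leq_addr ?addn0 //.
Qed.

Lemma sum_nat_eq0_mul n c : 0 < n -> \sum_(0 <= y < n) (y == 0) * c = c.
Proof. by move=> n_gt0; rewrite -big_distrl /= sum_nat_eq n_gt0 mul1n. Qed.

Definition fiber (g : nat -> nat) n y := \sum_(0 <= x < n) (g x == y).
Definition collisions (g : nat -> nat) n := \sum_(0 <= y < n) fiber g n y ^ 2.

Section TreeMap.
Variables (k : nat) (a b : nat -> nat).

Definition lvl i := \sum_(j < i) a j.
Definition in_lvl i x := lvl i <= x < lvl i.+1.

Definition parent x :=
  if [pick i : 'I_k | in_lvl i.+1 x] is Some i then lvl i + (x - lvl i.+1) %/ b i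
  else x.

Lemma lvlS i : lvl i.+1 = lvl i + a i.
Proof. by rewrite /lvl big_ord_recr. Qed.

Lemma lvl0 : lvl 0 = 0.
Proof. exact: big_ord0. Qed.

Lemma lvl_mono : {homo lvl : i j / i <= j}.
Proof.
move=> i j /subnK <-; elim: (j - i) => // m IH.
by rewrite addSn lvlS (leq_trans IH) ?leq_addr.
Qed.

Lemma in_lvl_inj x i j : in_lvl i x -> in_lvl j x -> i = j.
Proof.
move=> /andP[hi hi'] /andP[hj hj'].
by case: (ltngtP i j) => [/lvl_mono|/lvl_mono|//]; lia.
Qed.

Lemma parent_le x : parent x <= x.
Proof.
rewrite /parent; case: pickP => // i /andP[hx _].
have := lvl_mono (leqnSn i); have := leq_div (x - lvl i.+1) (b i); lia.
Qed.

Lemma parent0 : parent 0 = 0.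
Proof. by apply/eqP; rewrite -leqn0 parent_le. Qed.

Lemma parent_in_lvl i x : i < k -> in_lvl i.+1 x -> parent x = lvl i + (x - lvl i.+1) %/ b i.
Proof.
move=> ltik hx; rewrite /parent; case: pickP => [j hj | /(_ (Ordinal ltik))]; last by rewrite hx.
by rewrite (succn_inj (in_lvl_inj hj hx)).
Qed.

Lemma parent_id x : lvl k.+1 <= x -> parent x = x.
Proof.
move=> hx; rewrite /parent; case: pickP => // i /andP[_ hi].
by have := lvl_mono (ltn_ord i : i.+2 <= k.+1); lia.
Qed.

Lemma sqr_sum_lvl (c : nat -> nat) y :
  (\sum_(i < k) c i * in_lvl i y) ^ 2 = \sum_(i < k) c i ^ 2 * in_lvl i y.
Proof.
case: (pickP (fun i : 'I_k => in_lvl i y)) => [i0 hi0 | none]; last first.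
  by rewrite !big1 // => i _; rewrite none muln0.
have other j : j != i0 -> in_lvl j y = false.
  by apply: contraNF => hj; apply/eqP/val_inj/(in_lvl_inj hj hi0).
rewrite (bigD1 i0) // [in RHS](bigD1 i0) //= hi0 !muln1 !big1 ?addn0 // => j /other ->;
  by rewrite muln0.
Qed.

Lemma sum_lvl_large (c : nat -> nat) y : lvl k <= y -> \sum_(i < k) c i * in_lvl i y = 0.
Proof.
move=> hy; rewrite big1 // => i _; suff -> : in_lvl i y = false by rewrite muln0.
by apply/negbTE; have := lvl_mono (ltn_ord i); rewrite /in_lvl; lia.
Qed.

Hypotheses (a0 : a 0 = 1) (aS : forall i, i < k -> a i.+1 = a i * b i)
  (b_gt0 : forall i, 0 < b i).

Lemma lvl1 : lvl 1 = 1.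
Proof. by rewrite lvlS lvl0 a0. Qed.

Lemma parent_lvl i x : i < k -> in_lvl i.+1 x -> in_lvl i (parent x).
Proof.
move=> ltik hx; rewrite /in_lvl (parent_in_lvl ltik hx) leq_addr /= lvlS ltn_add2l.
by rewrite ltn_divLR // -aS //; move: hx; rewrite /in_lvl (lvlS i.+1) (lvlS i); lia.
Qed.

Lemma iter_parent_small i x : i <= k -> x < lvl i.+1 -> iter i parent x = 0.
Proof.
elim: i x => [|i IH] x leik; first by rewrite lvl1 ltnS leqn0 => /eqP ->.
case: (ltnP x (lvl i.+1)) => [hx _ | hx hx']; first by rewrite iterS IH ?parent0 ?(ltnW leik).
rewrite iterSr IH ?(ltnW leik) //.
have /(parent_lvl leik)/andP[] // : in_lvl i.+1 x by rewrite /in_lvl hx.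
Qed.

Lemma iter_parent_id m x : lvl k.+1 <= x -> iter m parent x = x.
Proof. by move=> hx; elim: m => //= m ->; rewrite parent_id. Qed.

Lemma sum_parent_lvl m y : m < k ->
  \sum_(lvl m.+1 <= x < lvl m.+2) (parent x == y) = b m * in_lvl m y.
Proof.
move=> ltmk; rewrite (lvlS m.+1) (aS ltmk) // -{1}[lvl m.+1]add0n big_addn addKn.
rewrite (eq_big_nat _ _ (F2 := fun x => lvl m + x %/ b m == y : nat)) => [|x hx].
  by rewrite sum_divn_eq // -lvlS.
by rewrite (parent_in_lvl ltmk) ?addnK // /in_lvl (lvlS m.+1) (aS ltmk); lia.
Qed.

Lemma fiber_parent_lvl m y : m <= k ->
  fiber parent (lvl m.+1) y = (y == 0) + \sum_(i < m) b i * in_lvl i y.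
Proof.
elim: m => [|m IH] lemk.
  by rewrite /fiber lvl1 big_nat1 big_ord0 parent0 addn0 eq_sym.
rewrite /fiber (big_cat_nat _ (n := lvl m.+1)) ?lvl_mono //= -/(fiber _ _ y).
by rewrite IH 1?ltnW // sum_parent_lvl // big_ord_recr addnA.
Qed.

Lemma fiber_parent n y : lvl k.+1 <= n ->
  fiber parent n y = (y == 0) + \sum_(i < k) b i * in_lvl i y + (lvl k.+1 <= y < n).
Proof.
move=> hn; rewrite /fiber (big_cat_nat _ (n := lvl k.+1)) //= -/(fiber _ _ y).
rewrite fiber_parent_lvl // -[in RHS]sum_nat_eq; congr (_ + _).
by apply: eq_big_nat => x /andP[hx _]; rewrite parent_id.
Qed.

Lemma fiber_iter_parent n y : lvl k.+1 <= n ->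
  fiber (iter k parent) n y = (y == 0) * lvl k.+1 + (lvl k.+1 <= y < n).
Proof.
move=> hn; rewrite /fiber (big_cat_nat _ (n := lvl k.+1)) //= -[in RHS]sum_nat_eq.
congr (_ + _); last by apply: eq_big_nat => x /andP[hx _]; rewrite iter_parent_id.
rewrite (eq_big_nat _ _ (F2 := fun=> (0 == y) : nat)) => [|x /andP[_ hx]].
  by rewrite sum_nat_const_nat subn0 mulnC eq_sym.
by rewrite iter_parent_small.
Qed.

Hypothesis k_gt0 : 0 < k.

Lemma lvl_gt0 i : 0 < i -> 0 < lvl i.
Proof. by move=> i_gt0; rewrite -lvl1 lvl_mono. Qed.

Lemma sum_lvl_at0 (c : nat -> nat) : \sum_(i < k) c i * in_lvl i 0 = c 0.
Proof.
have lvl_0 : in_lvl 0 0 by rewrite /in_lvl lvl0 lvl1.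
rewrite (bigD1 (Ordinal k_gt0)) //= lvl_0 muln1 big1 ?addn0 // => j neq.
suff -> : in_lvl j 0 = false by rewrite muln0.
by apply: contraNF neq => hj; apply/eqP/val_inj; apply: in_lvl_inj hj lvl_0.
Qed.

Lemma collisions_parent n : lvl k.+1 <= n ->
  collisions parent n = 1 + 2 * b 0 + \sum_(i < k) b i ^ 2 * a i + (n - lvl k.+1).
Proof.
move=> hn; have n_gt0 : 0 < n := leq_trans (lvl_gt0 (ltn0Sn k)) hn.
rewrite /collisions (eq_big_nat _ _ (F2 := fun y => (y == 0) * (1 + 2 * b 0) +
  \sum_(i < k) b i ^ 2 * in_lvl i y + (lvl k.+1 <= y < n))) => [|y /andP[_ hy]].
  rewrite !big_split /= sum_nat_eq0_mul // sum_nat_in_range ?hn ?leqnn //.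
  congr (_ + _ + _); rewrite exchange_big; apply: eq_bigr => i _ /=.
  rewrite -big_distrr /= sum_nat_in_range ?lvlS ?addKn //.
  by rewrite leq_addr -lvlS (leq_trans _ hn) // lvl_mono // ltnS ltnW.
rewrite fiber_parent // -sqr_sum_lvl hy andbT.
case: eqP => [-> | _]; first by rewrite sum_lvl_at0 leqNgt lvl_gt0 //= addn0 sqrnD; lia.
case: (leqP (lvl k.+1) y) => hyS; last by rewrite !addn0.
by rewrite sum_lvl_large // (leq_trans _ hyS) // lvl_mono.
Qed.

Lemma collisions_iter_parent n : lvl k.+1 <= n ->
  collisions (iter k parent) n = lvl k.+1 ^ 2 + (n - lvl k.+1).
Proof.
move=> hn; have S_gt0 := lvl_gt0 (ltn0Sn k); have n_gt0 : 0 < n := leq_trans S_gt0 hn.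
rewrite /collisions (eq_big_nat _ _ (F2 := fun y => (y == 0) * lvl k.+1 ^ 2 +
  (lvl k.+1 <= y < n))) => [|y /andP[_ hy]].
  by rewrite big_split /= sum_nat_eq0_mul // sum_nat_in_range ?hn ?leqnn.
rewrite fiber_iter_parent // hy andbT.
case: eqP => [-> | _]; last by rewrite !add0n; case: (_ <= _).
by rewrite leqNgt S_gt0 /= !addn0 !mul1n.
Qed.

End TreeMap.

Fixpoint iroot K n :=
  if n is n'.+1 then
    let t := iroot K n' in if t.+1 ^ K <= n then t.+1 else t
  else 0.

Lemma iroot_bounds K n : 0 < K -> iroot K n ^ K <= n < (iroot K n).+1 ^ K.
Proof.
move=> K_gt0; elim: n => [|n IH] /=; first by rewrite exp0n // exp1n.
move: IH; set r := iroot K n => IH; case: ifP => [le | /negbT]; last by rewrite -ltnNge; lia.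
have : r.+1 ^ K < r.+2 ^ K by rewrite ltn_exp2r.
by rewrite le; lia.
Qed.

Lemma iroot_ge K m n : 0 < K -> m ^ K <= n -> m <= iroot K n.
Proof.
move=> K_gt0 le; have /andP[_ lt] := iroot_bounds n K_gt0.
by rewrite -ltnS -(ltn_exp2r _ _ K_gt0) (leq_ltn_trans le).
Qed.

Lemma expSn_le t m : 0 < t -> t.+1 ^ m.+1 <= t ^ m.+1 + (2 ^ m.+1 - 1) * t ^ m.
Proof.
move=> t_gt0; elim: m => [|m IH]; first by rewrite !expn1 expn0; lia.
rewrite [t.+1 ^ _]expnS (leq_trans (leq_mul (leqnn t.+1) IH)) //.
rewrite [t ^ m.+2]expnS [t ^ m.+1]expnS [2 ^ m.+2]expnS.
have := expn_gt0 2 m.+1; have : t ^ m <= t * t ^ m by rewrite leq_pmull.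
nia.
Qed.

Section TreeParameters.
Variables (k t : nat).
Hypotheses (k_gt1 : 1 < k) (t_gt0 : 0 < t).

Definition tree_a i := t ^ (2 ^ k - 2 ^ (k - i)).
Definition tree_b i := t ^ (2 ^ (k - i.+1)).

Lemma exp2_ge4 : 4 <= 2 ^ k.
Proof. by rewrite (leq_trans _ (leq_pexp2l _ k_gt1)). Qed.

Lemma exp2_sub_split i : i < k -> 2 ^ (k - i) = 2 * 2 ^ (k - i.+1) /\ 2 ^ (k - i) <= 2 ^ k.
Proof.
by move=> ltik; rewrite -expnS subnSK // leq_pexp2l ?leq_subr.
Qed.

Lemma tree_a0 : tree_a 0 = 1.
Proof. by rewrite /tree_a subn0 subnn. Qed.

Lemma tree_aS i : i < k -> tree_a i.+1 = tree_a i * tree_b i.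
Proof.
move=> /exp2_sub_split[e le]; rewrite /tree_a /tree_b -expnD; congr (t ^ _); lia.
Qed.

Lemma tree_b_gt0 i : 0 < tree_b i.
Proof. by rewrite expn_gt0 t_gt0. Qed.

Lemma tree_b_sqr_a i : i < k -> tree_b i ^ 2 * tree_a i = t ^ 2 ^ k.
Proof.
move=> /exp2_sub_split[e le]; rewrite /tree_a /tree_b -expnM -expnD; congr (t ^ _); lia.
Qed.

Lemma sum_tree_b_sqr_a : \sum_(i < k) tree_b i ^ 2 * tree_a i = k * t ^ 2 ^ k.
Proof.
by rewrite (eq_bigr _ (fun i _ => tree_b_sqr_a (ltn_ord i))) sum_nat_const card_ord.
Qed.

Lemma tree_ak : tree_a k = t ^ (2 ^ k).-1.
Proof. by rewrite /tree_a subnn expn0 subn1. Qed.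

Lemma tree_a_small i : i < k -> tree_a i <= t ^ (2 ^ k).-2.
Proof.
move=> /exp2_sub_split[e le]; have := expn_gt0 2 (k - i.+1).
by rewrite /tree_a leq_pexp2l //; lia.
Qed.

Lemma tree_b0 : tree_b 0 <= t ^ (2 ^ k).-1.
Proof.
have [e _] := exp2_sub_split (ltnW k_gt1); rewrite subn0 in e.
by rewrite /tree_b leq_pexp2l //; have := exp2_ge4; lia.
Qed.

End TreeParameters.

Section TreeSizes.
Variables (k t : nat).
Hypotheses (k_gt1 : 1 < k) (k_lt_t : k < t).

Local Notation M := (t ^ (2 ^ k).-2).
Local Notation S := (lvl (tree_a k t) k.+1).
Let t_gt0 : 0 < t := leq_ltn_trans (leq0n k) k_lt_t.

Lemma tree_pow_pred1 : t ^ (2 ^ k).-1 = t * M.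
Proof. by rewrite -expnS; congr (t ^ _); have := exp2_ge4 k_gt1; lia. Qed.

Lemma tree_pow : t ^ 2 ^ k = t * (t * M).
Proof. by rewrite -!expnS; congr (t ^ _); have := exp2_ge4 k_gt1; lia. Qed.

Lemma tree_pow_pred2_ge : t <= M.
Proof. by rewrite -{1}(expn1 t) leq_pexp2l //; have := exp2_ge4 k_gt1; lia. Qed.

Lemma tree_lvl_ge : t * M <= S.
Proof. by rewrite lvlS tree_ak -tree_pow_pred1 leq_addl. Qed.

Lemma tree_lvl_le : S <= (t + k) * M.
Proof.
rewrite lvlS tree_ak tree_pow_pred1 mulnDl addnC leq_add2l.
rewrite -[k in k * _]card_ord -sum_nat_const leq_sum // => i _.
exact: tree_a_small.
Qed.

Lemma tree_lvl_le_pow : S <= t ^ 2 ^ k.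
Proof.
rewrite tree_pow (leq_trans tree_lvl_le) // mulnA leq_mul2r.
by apply/orP; right; nia.
Qed.

Lemma tree_succ_pow_le : t.+1 ^ 2 ^ k <= t * (t * M) + 2 ^ 2 ^ k * (t * M).
Proof.
have := expSn_le (2 ^ k).-1 t_gt0; rewrite prednK ?expn_gt0 // tree_pow_pred1 tree_pow.
by move/leq_trans; apply; rewrite leq_add2l leq_mul2r leq_subr orbT.
Qed.

End TreeSizes.

Lemma cube_le t C D : 2 * D <= C -> (t + D) ^ 2 * (t - C) <= t ^ 3.
Proof.
move=> leDC; case: (leqP t C) => [/eqP-> | /ltnW/subnKC tE]; first by rewrite muln0.
rewrite -{1 3}tE; set u := t - C.
have h1 : 2 * (C + D) * u ^ 2 <= 3 * C * u ^ 2 by rewrite leq_mul2r; lia.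
have h2 : (C + D) ^ 2 * u <= 3 * C ^ 2 * u by rewrite leq_mul2r; nia.
nia.
Qed.

(* Cleared-denominator forms of |deg f_n - (k+1)| <= C/t and
   |deg f_n^k / n^(1 - 2/2^k) - 1| <= C/t.  M stands for t^(2^k - 2), so that
   t * (t * M) = t^(2^k) and t * M is the size of the last level; S is the size
   of the whole tree. *)
Section CollisionEstimates.
Variables (k D t M n S : nat).
Hypotheses (t_gt0 : 0 < t) (t_le_M : t <= M)
  (n_ge : t * (t * M) <= n) (n_le : n <= t * (t * M) + D * (t * M))
  (S_ge : t * M <= S) (S_le : S <= (t + k) * M) (S_le_n : S <= n).

Lemma collisions_tree_upper b0 : b0 <= t * M ->
  (1 + 2 * b0 + k * (t * (t * M)) + (n - S)) * t <= k.+1 * n * t + (k * D + k + 3) * n.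
Proof.
move=> le_b0; have M_gt0 : 0 < M := leq_trans t_gt0 t_le_M.
have h1 : (1 + 2 * b0) * t <= 3 * n.
  have : (1 + 2 * b0) * t <= 3 * (t * M) * t by rewrite leq_mul2r; nia.
  nia.
have h2 : k * (t * (t * M)) * t <= k * n * t by rewrite leq_mul2r leq_mul2l n_ge !orbT.
have h3 : (n - S) * t <= n * t by rewrite leq_mul2r leq_subr orbT.
nia.
Qed.

Lemma collisions_tree_lower b0 :
  k.+1 * n * t <= (1 + 2 * b0 + k * (t * (t * M)) + (n - S)) * t + (k * D + k + 3) * n.
Proof.
have h1 : k * (n * t) <= k * (t * (t * M)) * t + k * D * n.
  have : n * t <= t * (t * M) * t + D * (t * M) * t by rewrite -mulnDl leq_mul2r n_le orbT.
  have : D * (t * M) * t <= D * n by rewrite -mulnA (mulnC _ t) leq_mul2l n_ge orbT.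
  nia.
have h2 : S * t <= k.+1 * n.
  have : S * t <= (t + k) * M * t by rewrite leq_mul2r S_le orbT.
  have : k * M * t <= k * n by rewrite -mulnA leq_mul2l (leq_trans _ n_ge) ?orbT //; nia.
  nia.
have h3 : n * t = (n - S) * t + S * t by rewrite -mulnDl subnK.
nia.
Qed.

Lemma collisions_iter_tree_upper :
  (S ^ 2 + (n - S)) * t <= t * (t * M) * M * (t + (k.+1 ^ 2 + 2 * D)).
Proof.
have -> : t * (t * M) * M = (t * M) ^ 2 by ring.
have h1 : S ^ 2 * t <= (t * M) ^ 2 * (t + 2 * k + k ^ 2).
  have e : (t + k) ^ 2 * t <= t ^ 2 * (t + 2 * k + k ^ 2).
    have -> : (t + k) ^ 2 * t = t ^ 2 * (t + 2 * k) + k ^ 2 * t by ring.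
    have -> : t ^ 2 * (t + 2 * k + k ^ 2) = t ^ 2 * (t + 2 * k) + k ^ 2 * t ^ 2 by ring.
    by rewrite leq_add2l leq_mul2l -{1}(expn1 t) leq_pexp2l ?orbT.
  have : S ^ 2 * t <= ((t + k) * M) ^ 2 * t by rewrite leq_mul2r leq_exp2r ?S_le ?orbT.
  move/leq_trans; apply; have -> : ((t + k) * M) ^ 2 * t = M ^ 2 * ((t + k) ^ 2 * t) by ring.
  have -> : (t * M) ^ 2 * (t + 2 * k + k ^ 2) = M ^ 2 * (t ^ 2 * (t + 2 * k + k ^ 2)) by ring.
  by rewrite leq_mul2l e orbT.
have h2 : n * t <= (t * M) ^ 2 * (1 + D).
  have tD : (t + D) * t <= t * M * (1 + D).
    have : t * t <= t * M by rewrite leq_mul2l t_le_M orbT.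
    have : D * t <= D * (t * M) by rewrite leq_mul2l leq_pmulr ?orbT // (leq_trans t_gt0).
    have -> : (t + D) * t = t * t + D * t by ring.
    have -> : t * M * (1 + D) = t * M + D * (t * M) by ring.
    lia.
  apply: (@leq_trans (t * M * (t + D) * t)).
    by rewrite leq_mul2r mulnDr (mulnC (t * M) t) (mulnC (t * M) D) n_le orbT.
  have -> : (t * M) ^ 2 * (1 + D) = t * M * (t * M * (1 + D)) by ring.
  by rewrite -mulnA leq_mul2l tD orbT.
have h3 : (n - S) * t <= n * t by rewrite leq_mul2r leq_subr orbT.
rewrite mulnDl (leq_trans (leq_add h1 (leq_trans h3 h2))) // -mulnDr leq_mul2l.
have -> : k.+1 ^ 2 = k ^ 2 + 2 * k + 1 by ring.
by apply/orP; right; lia.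
Qed.

Lemma collisions_iter_tree_lower :
  n ^ 2 * M * (t - (k.+1 ^ 2 + 2 * D)) <= t * (t * M) * (S ^ 2 + (n - S)) * t.
Proof.
set C := k.+1 ^ 2 + 2 * D.
have h1 : n ^ 2 <= (t * M) ^ 2 * (t + D) ^ 2.
  by rewrite -expnMn leq_exp2r // mulnDr (mulnC (t * M) t) (mulnC (t * M) D).
have h2 : (t + D) ^ 2 * (t - C) <= t ^ 3 by apply: cube_le; rewrite /C; lia.
have h3 : (t * M) ^ 2 <= S ^ 2 + (n - S) by rewrite (leq_trans _ (leq_addr _ _)) ?leq_exp2r.
apply: (@leq_trans ((t * M) ^ 2 * M * ((t + D) ^ 2 * (t - C)))).
  set u := t - C; have -> : (t * M) ^ 2 * M * ((t + D) ^ 2 * u) = (t * M) ^ 2 * (t + D) ^ 2 * M * u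
    by ring.
  by rewrite !leq_mul2r h1 !orbT.
apply: (@leq_trans ((t * M) ^ 2 * M * t ^ 3)); first by rewrite leq_mul2l h2 orbT.
have -> : (t * M) ^ 2 * M * t ^ 3 = t * (t * M) * (t * M) ^ 2 * t by ring.
by rewrite leq_mul2r leq_mul2l h3 !orbT.
Qed.

End CollisionEstimates.

Local Open Scope classical_set_scope.
Local Open Scope ring_scope.

Section DistanceBounds.
Variable R : realFieldType.
Implicit Types Y n t C L N M p : R.

Lemma dist_div_le Y n t C L : 0 < n -> 0 < t ->
  Y * t <= L * n * t + C * n -> L * n * t <= Y * t + C * n -> `|Y / n - L| <= C / t.
Proof.
move=> n_gt0 t_gt0 hi lo; have nt_gt0 : 0 < n * t by rewrite mulr_gt0.
have -> : Y / n - L = (Y * t - L * n * t) / (n * t) by field; rewrite !gt_eqF.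
rewrite normf_div (gtr0_norm nt_gt0) ler_pdivrMr //.
have -> : C / t * (n * t) = C * n by field; rewrite gt_eqF.
by rewrite ler_norml; apply/andP; split; lra.
Qed.

Lemma dist_div_div_le Y n p t C N M : 0 < t -> 0 <= C -> 0 < N -> 0 < M -> 0 <= Y ->
  N <= n -> M <= p -> p * N <= n * M ->
  Y * t <= N * M * (t + C) -> (C < t -> n ^+ 2 * M * (t - C) <= N * Y * t) ->
  `|Y / n / p - 1| <= C / t.
Proof.
move=> t_gt0 C_ge0 N_gt0 M_gt0 Y_ge0 le_Nn le_Mp le_p hi lo.
have n_gt0 : 0 < n := lt_le_trans N_gt0 le_Nn.
have p_gt0 : 0 < p := lt_le_trans M_gt0 le_Mp.
have np_gt0 : 0 < n * p by rewrite mulr_gt0.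
rewrite -mulrA -invfM ler_distl; apply/andP; split.
- case: (ltP C t) => [lt_Ct | le_tC]; last first.
    apply: (@le_trans _ _ 0); last by rewrite divr_ge0 // ltW.
    by rewrite subr_le0 ler_pdivlMr // mul1r.
  rewrite ler_pdivlMr // -(ler_pM2r t_gt0) -(ler_pM2l N_gt0).
  have -> : (1 - C / t) * (n * p) * t = (t - C) * n * p by field; rewrite gt_eqF.
  rewrite mulrA; apply: le_trans (lo lt_Ct); rewrite -subr_ge0.
  have -> : n ^+ 2 * M * (t - C) - N * ((t - C) * n * p) = (t - C) * n * (n * M - p * N) by ring.
  by rewrite !mulr_ge0 ?subr_ge0 // ?ltW // subr_gt0.
- rewrite ler_pdivrMr // -(ler_pM2r t_gt0) (le_trans hi) //.
  have -> : (1 + C / t) * (n * p) * t = n * p * (t + C) by field; rewrite gt_eqF.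
  by apply: ler_wpM2r; [rewrite addr_ge0 // ltW | apply: ler_pM; rewrite // ltW].
Qed.

End DistanceBounds.

Lemma powR_between (R : realType) (N x a : R) : 0 < N -> N <= x -> 0 <= a <= 1 ->
  N `^ a <= x `^ a /\ x `^ a * N <= x * N `^ a.
Proof.
move=> N_gt0 le_Nx /andP[a_ge0 a_le1]; have N_ge0 := ltW N_gt0.
split; first by rewrite ge0_ler_powR // nnegrE (le_trans N_ge0).
have q_ge1 : 1 <= x / N by rewrite ler_pdivlMr // mul1r.
rewrite -{1}(divfK (lt0r_neq0 N_gt0) x) powRM ?(le_trans ler01 q_ge1) //.
rewrite -[in leRHS](divfK (lt0r_neq0 N_gt0) x) mulrAC.
by rewrite ler_pM2r ?powR_gt0 // ler_pM2r //; apply: ler1_powR.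
Qed.

Lemma cvg_dist_le_inv (R : realType) (u : nat -> R) (L C : R) (t : nat -> nat) m0 :
  (forall m, \forall n \near \oo, (m <= t n)%N) ->
  (forall n, (m0 <= t n)%N -> `|u n - L| <= C / (t n)%:R) ->
  u n @[n --> \oo] --> L.
Proof.
move=> t_oo bound; apply/cvgrPdist_le => e e_gt0.
apply: filterS (t_oo (maxn m0 (Num.truncn (C / e)).+1)) => n.
rewrite geq_max => /andP[m0_le lt_t].
have t_gt0 : (0 < (t n)%:R :> R) by rewrite ltr0n (leq_trans _ lt_t).
rewrite distrC (le_trans (bound n m0_le)) // ler_pdivrMr // mulrC -ler_pdivrMr //.
by rewrite ltW // (lt_le_trans (truncnS_gt _)) // ler_nat.
Qed.

Lemma deg_ord (R : realType) n (h : 'I_n -> 'I_n) (g : nat -> nat) :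
  (forall x, val (h x) = g x) -> deg R h = (collisions g n)%:R / n%:R.
Proof.
move=> hg; rewrite /deg card_ord /collisions natr_sum big_mkord; congr (_ / _).
apply: eq_bigr => y _; rewrite natrX /fiber -sum1_card big_mkcond big_mkord /=.
by congr (_%:R ^+ 2); apply: eq_bigr => x _; rewrite inE -val_eqE /= hg.
Qed.

Lemma iter_val n (h : 'I_n -> 'I_n) (g : nat -> nat) :
  (forall x, val (h x) = g x) -> forall m x, val (iter m h x) = iter m g x.
Proof. by move=> hg; elim=> // m IH x /=; rewrite hg IH. Qed.

Lemma powR_pow_exp2 (R : realType) (k t : nat) : (0 < k)%N ->
  ((t ^ 2 ^ k)%:R : R) `^ (1 - (2 ^+ (k - 1))^-1) = (t ^ (2 ^ k).-2)%:R.
Proof.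
move=> k_gt0; have e : (2 ^ k = 2 * 2 ^ (k - 1))%N by rewrite -expnS subn1 prednK.
have ex : ((2 ^ k)%:R : R) * (1 - (2 ^+ (k - 1))^-1) = ((2 ^ k).-2)%:R.
  rewrite e natrM natrX mulrBr mulr1 mulfK ?expf_neq0 ?pnatr_eq0 //.
  by rewrite -subn2 natrB ?natrM ?natrX // leq_pmulr ?expn_gt0.
by rewrite !natrX -(powR_mulrn (2 ^ k)) ?ler0n // -powRrM ex powR_mulrn ?ler0n.
Qed.

Section TreeConstruction.
Variables (R : realType) (k : nat).
Hypothesis k_gt1 : (1 < k)%N.

Definition tree_root n := iroot (2 ^ k) n.
Definition tree n := parent k (tree_a k (tree_root n)) (tree_b k (tree_root n)).
Definition tree_fun n : 'I_n -> 'I_n :=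
  fun x => @Ordinal n (tree n x) (leq_ltn_trans (@parent_le _ _ _ x) (ltn_ord x)).

Lemma tree_root_unbounded m : \forall n \near \oo, (m <= tree_root n)%N.
Proof. by exists (m ^ 2 ^ k)%N => // n; apply: iroot_ge; rewrite expn_gt0. Qed.

Section TreeAt.
Variable n : nat.
Hypothesis k_lt_t : (k < tree_root n)%N.

Local Notation t := (tree_root n).
Local Notation M := (t ^ (2 ^ k).-2)%N.
Local Notation S := (lvl (tree_a k t) k.+1).
Local Notation D := (2 ^ 2 ^ k)%N.

Let k_gt0 : (0 < k)%N := ltnW k_gt1.
Let t_gt0 : (0 < t)%N := leq_ltn_trans (leq0n k) k_lt_t.

Lemma tree_shape : [/\ 0 < t, t <= M, t * (t * M) <= n <= t * (t * M) + D * (t * M),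
  t * M <= S <= (t + k) * M & S <= n]%N.
Proof.
have /andP[t_le t_lt] : (t ^ 2 ^ k <= n < t.+1 ^ 2 ^ k)%N := iroot_bounds n (expn_gt0 2 k).
rewrite tree_pow // in t_le.
split; [by [] | exact: tree_pow_pred2_ge | | | ].
- by rewrite t_le (leq_trans (ltnW t_lt)) ?tree_succ_pow_le.
- by rewrite tree_lvl_ge ?tree_lvl_le.
- by rewrite (leq_trans (tree_lvl_le_pow _ _)) // tree_pow.
Qed.

Lemma collisions_tree :
  collisions (tree n) n = (1 + 2 * tree_b k t 0 + k * (t * (t * M)) + (n - S))%N.
Proof.
have [_ _ _ _ S_le_n] := tree_shape.
by rewrite collisions_parent ?tree_a0 ?sum_tree_b_sqr_a ?tree_pow //;
  [exact: tree_aS | exact: tree_b_gt0].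
Qed.

Lemma collisions_iter_tree : collisions (iter k (tree n)) n = (S ^ 2 + (n - S))%N.
Proof.
have [_ _ _ _ S_le_n] := tree_shape.
by rewrite collisions_iter_parent ?tree_a0 //; [exact: tree_aS | exact: tree_b_gt0].
Qed.

Lemma deg_tree_dist : `|deg R (@tree_fun n) - k.+1%:R| <= (k * D + k + 3)%:R / t%:R.
Proof.
have [_ t_le_M /andP[n_ge n_le] /andP[S_ge S_le] S_le_n] := tree_shape.
rewrite (@deg_ord R n _ (tree n)) // collisions_tree.
have n_gt0 : (0 < n)%N by rewrite (leq_trans _ n_ge) // !muln_gt0 t_gt0 expn_gt0 t_gt0.
apply: dist_div_le; rewrite ?ltr0n // -!natrM -!natrD ler_nat.
  by apply: collisions_tree_upper => //; rewrite -tree_pow_pred1 // tree_b0.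
exact: collisions_tree_lower.
Qed.

Lemma deg_iter_tree_dist :
  `|deg R (iter k (@tree_fun n)) / n%:R `^ (1 - (2 ^+ (k - 1))^-1) - 1|
    <= (k.+1 ^ 2 + 2 * D)%:R / t%:R.
Proof.
have [_ t_le_M /andP[n_ge n_le] /andP[S_ge S_le] S_le_n] := tree_shape.
have M_gt0 : (0 < M)%N := leq_trans t_gt0 t_le_M.
have N_gt0 : (0 : R) < (t ^ 2 ^ k)%:R by rewrite ltr0n expn_gt0 t_gt0.
have N_le_n : ((t ^ 2 ^ k)%:R : R) <= n%:R by rewrite ler_nat tree_pow.
have a_range : (0 : R) <= 1 - (2 ^+ (k - 1))^-1 <= (1 : R).
  have two_k_ge1 : (1 : R) <= 2 ^+ (k - 1) by rewrite exprn_ege1 // ler1n.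
  have two_k_gt0 : (0 : R) < 2 ^+ (k - 1) := lt_le_trans ltr01 two_k_ge1.
  by apply/andP; split; rewrite ?subr_ge0 ?invf_le1 // lerBlDr lerDl invr_ge0 ltW.
have [] := powR_between N_gt0 N_le_n a_range.
rewrite powR_pow_exp2 // tree_pow // => M_le p_le.
rewrite (@deg_ord R n _ (iter k (tree n))); last exact: iter_val.
rewrite collisions_iter_tree; apply: dist_div_div_le (M_le) (p_le) _ _.
all: rewrite ?ltr0n ?ler0n ?ler_nat ?M_gt0 ?muln_gt0 ?t_gt0 //.
  by rewrite -!natrD -!natrM ler_nat; apply: collisions_iter_tree_upper.
rewrite ltr_nat => /ltnW le_t; rewrite -natrB // -natrX -!natrM ler_nat.
exact: collisions_iter_tree_lower.
Qed.

End TreeAt.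
End TreeConstruction.

Theorem mainTheorem3 (R : realType) (k : nat) (hk : (2 <= k)%N) :
  exists (X : nat -> finType) (f : forall n : nat, X n -> X n),
    (forall n : nat, #|X n| = n) /\
    (deg R (f n) @[n --> \oo] --> ((k.+1)%:R : R)) /\
    (deg R (iter k (f n)) / ((n%:R : R) `^ (1 - (2 ^+ (k - 1))^-1))
       @[n --> \oo] --> (1 : R)).
Proof.
exists (fun n => 'I_n : finType), (@tree_fun k); split; first by move=> n; rewrite card_ord.
split; apply: (cvg_dist_le_inv (tree_root_unbounded k) (m0 := k.+1)) => n.
- exact: deg_tree_dist.
- exact: deg_iter_tree_dist.
Qed.
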